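(* Let $(X,\mathcal{F})$ be a Subset Avoider-Enforcer game and let $a,b\in X$ be distinct vertices with $L(a)\prec L(b)$. If a player (Avoider or Enforcer) has a winning strategy in this game, then she also has a winning strategy in which she always prefers claiming $a$ over claiming $b$, i.e. a winning strategy which, whenever it is her turn and both $a$ and $b$ are unclaimed, never claims $b$.
   Context: A Subset Avoider-Enforcer game $(X,\mathcal{F})$ consists of a finite board $X$ and a family $\mathcal{F}$ of pairs $(f,i_f)$ with $f\subseteq X$ and $i_f\in\mathbb{N}$. Avoider and Enforcer alternately claim one previously unclaimed element of $X$ per move (either player may be designated to start) until all of $X$ is claimed. Avoider loses (Enforcer wins) if for some $(f,i_f)\in\mathcal{F}$ she has claimed at least $i_f$ elements of $f$; otherwise Avoider wins. (An ordinary Avoider-Enforcer game with losing sets $\mathcal{F}'$ corresponds to taking pairs $(f,|f|)$ for $f\in\mathcal{F}'$.) For $v\in X$ let $L(v)=\{(f,i_f)\in\mathcal{F} : v\in f\}$. We write $L(a)\prec L(b)$ if for every $(f,i_f)\in L(a)$ there is $(g,i_g)\in L(b)$ with $g\subseteq f$ and $i_g\le i_f$. *)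

From mathcomp Require Import all_boot.
Set Implicit Arguments. Unset Strict Implicit. Unset Printing Implicit Defensive.

Inductive player := Avoider | Enforcer.

Definition player_eqb (p q : player) : bool :=
  match p, q with
  | Avoider, Avoider | Enforcer, Enforcer => true
  | _, _ => false
  end.

Definition other (p : player) : player :=
  match p with Avoider => Enforcer | Enforcer => Avoider end.

(* The player who makes move number k (k = 0 is the first move), when
   [st] is the player who starts. *)
Definition player_at (st : player) (k : nat) : player :=
  if odd k then other st else st.

Section Game.
Variable X : finType.

(* A Subset Avoider-Enforcer game on board X is given by the sae_family F of
   pairs (f, i_f). *)
Definition sae_family := seq ({set X} * nat).

(* Elements claimed by player p in the (partial) play [play], whose first
   element is move number k. *)
Fixpoint claims (p st : player) (k : nat) (play : seq X) : seq X :=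
  match play with
  | [::] => [::]
  | x :: t => if player_eqb (player_at st k) p then x :: claims p st k.+1 t
              else claims p st k.+1 t
  end.

Definition avoider_loses (F : sae_family) (A : {set X}) : bool :=
  has (fun fi : {set X} * nat => fi.2 <= #|fi.1 :&: A|) F.

Definition wins (F : sae_family) (st p : player) (play : seq X) : bool :=
  let A := [set x in claims Avoider st 0 play] in
  match p with
  | Avoider => ~~ avoider_loses F A
  | Enforcer => avoider_loses F A
  end.

(* A history is the sequence of elements claimed so far, in order.
   A strategy maps histories to the next element to claim. *)
Definition strategy := seq X -> X.

Definition turn_of (st p : player) (h : seq X) : Prop :=
  [/\ uniq h, size h < #|X| & player_at st (size h) = p].

Definition legal (st p : player) (s : strategy) : Prop :=
  forall h, turn_of st p h -> s h \notin h.

Definition complete_play (play : seq X) : bool :=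
  uniq play && (size play == #|X|).

Definition consistent (st p : player) (s : strategy) (play : seq X) : Prop :=
  forall h x t, play = rcons h x ++ t -> player_at st (size h) = p -> x = s h.

Definition winning_strategy (F : sae_family) (st p : player) (s : strategy) : Prop :=
  legal st p s /\
  forall play, complete_play play -> consistent st p s play -> wins F st p play.

Definition Lprec (F : sae_family) (a b : X) : Prop :=
  forall fi, fi \in F -> a \in fi.1 ->
    exists2 gj, gj \in F & [/\ b \in gj.1, gj.1 \subset fi.1 & gj.2 <= fi.2].

Definition prefers (st p : player) (s : strategy) (a b : X) : Prop :=
  forall h, turn_of st p h -> a \notin h -> b \notin h -> s h != b.

End Game.

From mathcomp Require Import all_boot fingroup perm.
Set Implicit Arguments. Unset Strict Implicit. Unset Printing Implicit Defensive.

(* Given a winning strategy s, follow s until the first time it would claim b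
   while a and b are both free; claim a there instead, and from then on answer
   as s would on the history with a and b exchanged. A play of the new strategy
   is then either a play of s, or the image under the transposition (a b) of a
   play of s in which the player claimed b at that point. Since L(a) < L(b)
   forces every losing set containing a to contain b, replacing a by b in
   Avoider's set never lowers her count in a losing set; hence the transposed
   play is won whenever the play of s is: Avoider ends up with a instead of b,
   or Enforcer leaves her b instead of a. *)

Lemma player_eqbP (p q : player) : reflect (p = q) (player_eqb p q).
Proof. by case: p; case: q; constructor. Qed.

Section Plays.
Variable X : finType.
Implicit Types (play : seq X) (s : strategy X).

Lemma consistentP st p s play (x0 : X) :
  consistent st p s play <->
  (forall i, i < size play -> player_at st i = p -> nth x0 play i = s (take i play)).
Proof.
split=> [Cs i ilt pi | Cs h x t Eplay ph].
- have Eplay : play = rcons (take i play) (nth x0 play i) ++ drop i.+1 play.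
    by rewrite cat_rcons -drop_nth // cat_take_drop.
  by apply: (Cs _ _ _ Eplay); rewrite size_take ilt.
- have hlt : size h < size play by rewrite Eplay size_cat size_rcons leq_addr.
  by have := Cs _ hlt ph; rewrite Eplay cat_rcons nth_cat ltnn subnn take_size_cat.
Qed.

Lemma mem_complete_play play x : complete_play play -> x \in play.
Proof.
case/andP=> Uplay /eqP Splay.
have Ecard : #|play| = #|X| by rewrite (card_uniqP Uplay).
by rewrite ((subset_cardP Ecard) (subset_predT _)).
Qed.

Lemma complete_play_map (f : X -> X) play :
  injective f -> complete_play (map f play) = complete_play play.
Proof. by move=> f_inj; rewrite /complete_play size_map (map_inj_uniq f_inj). Qed.

Lemma claims_map (f : X -> X) q st k play :
  claims q st k (map f play) = map f (claims q st k play).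
Proof. by elim: play k => //= x play IH k; case: ifP; rewrite IH. Qed.

Lemma claims_sub q st k play : {subset claims q st k play <= play}.
Proof.
elim: play k => //= x play IH k y; case: ifP => _; last by move/IH; rewrite inE orbC => ->.
by rewrite !inE => /orP[-> // | /IH ->]; rewrite orbT.
Qed.

Lemma mem_claims_nth q st k play i (x0 : X) : uniq play -> i < size play ->
  (nth x0 play i \in claims q st k play) = player_eqb (player_at st (k + i)) q.
Proof.
elim: play k i => //= x play IH k [|i] /andP[xNplay Uplay] ilt.
- rewrite addn0; case: ifP => _; first by rewrite mem_head.
  by apply/negbTE; apply: contra xNplay; apply: claims_sub.
- have xNi : nth x0 play i != x.
    by apply: contraNneq xNplay => <-; rewrite mem_nth.
  by case: ifP => _; rewrite ?inE ?(negbTE xNi) /= IH // addSnnS.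
Qed.

Variables a b : X.
Local Notation t := (tperm a b).

Lemma set_map_tperm (l : seq X) : [set x in map t l] = t @^-1: [set x in l].
Proof. by apply/setP=> x; rewrite !inE -{1}(tpermK a b x) (mem_map (@perm_inj _ t)). Qed.

Lemma preimset_tpermK (B : {set X}) : t @^-1: (t @^-1: B) = B.
Proof. by apply/setP=> x; rewrite !inE tpermK. Qed.

Lemma card_setI_preim_tperm (f B : {set X}) :
  (a \in f -> b \in f) -> (a \in B) || (b \notin B) ->
  #|f :&: B| <= #|f :&: t @^-1: B|.
Proof.
move=> fab aBbB; case: (boolP (a \in f)) => af.
- have tf : t @^-1: f = f.
    by apply/setP=> x; rewrite inE; case: tpermP => [->|->|//]; rewrite af fab.
  by rewrite -{2}tf -preimsetI card_preimset //; apply: perm_inj.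
- apply/subset_leq_card/subsetP=> x; rewrite !inE => /andP[xf xB]; rewrite xf.
  case: tpermP => [xa | xb | //]; first by rewrite -xa xf in af.
  by move: aBbB; rewrite -xb xB orbF.
Qed.

Lemma avoider_loses_preim_tperm (F : sae_family X) (B : {set X}) :
  (forall fi, fi \in F -> a \in fi.1 -> b \in fi.1) -> (a \in B) || (b \notin B) ->
  avoider_loses F B -> avoider_loses F (t @^-1: B).
Proof.
move=> Fab aBbB /hasP[fi Ffi le]; apply/hasP; exists fi => //.
exact: leq_trans le (card_setI_preim_tperm (Fab _ Ffi) aBbB).
Qed.

Lemma wins_map_tperm (F : sae_family X) st p play k :
  (forall fi, fi \in F -> a \in fi.1 -> b \in fi.1) -> uniq play ->
  k < size play -> player_at st k = p -> nth a play k = a ->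
  wins F st p (map t play) -> wins F st p play.
Proof.
move=> Fab Uplay klt pk ak; rewrite /wins claims_map set_map_tperm.
set A := [set x in claims Avoider st 0 play].
have aA : (a \in A) = player_eqb p Avoider.
  by rewrite inE -{1}ak mem_claims_nth // add0n pk.
case: p pk aA => _ aA.
- by apply: contra; apply: avoider_loses_preim_tperm; rewrite // aA.
- move/avoider_loses_preim_tperm; rewrite preimset_tpermK; apply => //.
  by rewrite [b \in _]inE tpermR aA orbT.
Qed.

End Plays.

Section PreferringStrategy.
Variables (X : finType) (st p : player) (a b : X) (s : strategy X).
Local Notation t := (tperm a b).

Definition swap_point (h : seq X) : bool :=
  [&& player_eqb (player_at st (size h)) p, a \notin h, b \notin h & s h == b].

(* The default [a] of [nth] makes the current position [k = size h] count:
   a swap point that is [h] itself. *)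
Definition swapped (h : seq X) : bool :=
  has (fun k => swap_point (take k h) && (nth a h k == a)) (iota 0 (size h).+1).

Definition prefer_strategy : strategy X :=
  fun h => if swapped h then t (s (map t h)) else s h.

Lemma swappedP h :
  reflect (exists k, [/\ k <= size h, swap_point (take k h) & nth a h k = a])
          (swapped h).
Proof.
apply: (iffP hasP) => [[k] | [k [klt sk ak]]].
- by rewrite mem_iota ltnS => klt /andP[sk /eqP ak]; exists k.
- by exists k; rewrite ?mem_iota ?ltnS // sk ak eqxx.
Qed.

Lemma map_tperm_id (h : seq X) : a \notin h -> b \notin h -> map t h = h.
Proof.
move=> aNh bNh; apply: map_id_in => x xh; apply: tpermD.
- by apply: contraNneq aNh => ->.
- by apply: contraNneq bNh => ->.
Qed.

Lemma swap_point_tperm h : swap_point h -> t (s (map t h)) = a.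
Proof. by case/and4P=> _ aNh bNh /eqP sb; rewrite map_tperm_id // sb tpermR. Qed.

Lemma legal_prefer_strategy : legal st p s -> legal st p prefer_strategy.
Proof.
move=> Ls h [Uh hlt ph]; rewrite /prefer_strategy; case: ifP => _; last exact: Ls.
have th : turn_of st p (map t h) by split; rewrite ?size_map ?(map_inj_uniq (@perm_inj _ t)).
by rewrite -(mem_map (@perm_inj _ t)) tpermK; apply: Ls.
Qed.

Lemma prefers_prefer_strategy : a != b -> prefers st p prefer_strategy a b.
Proof.
move=> ab h [_ _ ph] aNh bNh; rewrite /prefer_strategy; case: ifPn => sh.
- case/swappedP: sh => k [kle sk ak].
  have Ek : k = size h.
    apply/eqP; rewrite eqn_leq kle leqNgt; apply: contra aNh => klt.
    by rewrite -ak mem_nth.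
  by move: sk; rewrite Ek take_size => /swap_point_tperm ->.
- apply: contra sh => /eqP sb; apply/swappedP; exists (size h).
  by rewrite take_size nth_default // /swap_point ph aNh bNh sb eqxx;
     split=> //; apply/andP; split=> //; apply/player_eqbP.
Qed.

Section PreferringPlay.
Variable play : seq X.
Hypothesis play_prefer : forall i, i < size play -> player_at st i = p ->
  nth a play i = prefer_strategy (take i play).

Lemma swapped_take i : i < size play -> swapped (take i play) ->
  exists k, [/\ k <= i, swap_point (take k play) & nth a play k = a].
Proof.
move=> ilt si; case/swappedP: (si) => k [kle sk ak]; rewrite size_take ilt in kle.
rewrite take_takel // in sk; exists k; split=> //.
have [kli | ikl] := ltnP k i; first by rewrite -(nth_take _ kli).
have Eki : k = i by apply/eqP; rewrite eqn_leq kle.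
subst k; have pi : player_at st i = p.
  by case/and4P: sk => /player_eqbP; rewrite size_take ilt.
by rewrite play_prefer // /prefer_strategy si swap_point_tperm.
Qed.

Lemma consistent_unswapped : ~~ swapped play -> consistent st p s play.
Proof.
move=> Nsp; apply/(consistentP _ _ _ _ a) => i ilt pi.
rewrite play_prefer // /prefer_strategy; case: ifP => // si.
case: (swapped_take ilt si) => k [kle sk ak]; case/negP: Nsp.
by apply/swappedP; exists k; split=> //; apply: leq_trans kle (ltnW ilt).
Qed.

Lemma consistent_swapped k0 :
  k0 < size play -> swap_point (take k0 play) -> nth a play k0 = a ->
  (forall k, k <= size play -> swap_point (take k play) -> nth a play k = a -> k0 <= k) ->
  consistent st p s (map t play).
Proof.
move=> k0lt sk0 ak0 k0min; apply/(consistentP _ _ _ _ a); rewrite size_map => i ilt pi.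
rewrite (nth_map a) // -map_take; have [k0i | ik0] := leqP k0 i.
- have si : swapped (take i play).
    apply/swappedP; exists k0; rewrite size_take ilt take_takel //; split=> //.
    have [k0lti | ik0'] := ltnP k0 i; first by rewrite nth_take.
    by rewrite nth_default // size_take ilt.
  by rewrite play_prefer // /prefer_strategy si tpermK.
- have Nsi : ~~ swapped (take i play).
    apply/negP => /(swapped_take ilt)[k [kle sk ak]].
    have := leq_trans (k0min _ (leq_trans kle (ltnW ilt)) sk ak) kle.
    by rewrite leqNgt ik0.
  case/and4P: sk0 => _ aN bN _.
  have sub : {subset take i play <= take k0 play}.
    by move=> x; rewrite -(take_takel _ (ltnW ik0)); apply: mem_take.
  have ik : nth a play i \in take k0 play.
    by rewrite -(nth_take _ ik0) mem_nth // size_take k0lt.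
  have [iNa iNb] : nth a play i != a /\ nth a play i != b.
    by split; apply/negP => /eqP E; [move: aN | move: bN]; rewrite -E ik.
  have [aNi bNi] : a \notin take i play /\ b \notin take i play.
    by split; [apply: contra (sub a) aN | apply: contra (sub b) bN].
  rewrite (map_tperm_id aNi bNi) tpermD 1?eq_sym //.
  by rewrite play_prefer // /prefer_strategy (negbTE Nsi).
Qed.

Lemma prefer_play_cases : complete_play play ->
  consistent st p s play \/
  exists k, [/\ k < size play, player_at st k = p, nth a play k = a
              & consistent st p s (map t play)].
Proof.
move=> Cplay; have [sp | ] := boolP (swapped play); last first.
  by left; apply: consistent_unswapped.
right; have exk : exists k,
    (k <= size play) && swap_point (take k play) && (nth a play k == a).
  by case/swappedP: sp => k [kle sk ak]; exists k; rewrite kle sk ak eqxx.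
case: (ex_minnP exk) => k0 /andP[/andP[k0le sk0] /eqP ak0] k0min.
have k0lt : k0 < size play.
  rewrite ltn_neqAle k0le andbT; apply: contraTneq _ sk0 => ->.
  by rewrite take_size /swap_point (mem_complete_play a Cplay) /= andbF.
have pk0 : player_at st k0 = p.
  by case/and4P: sk0 => /player_eqbP; rewrite size_take k0lt.
exists k0; split=> //; apply: (consistent_swapped k0lt sk0 ak0) => k kle sk ak.
by apply: k0min; rewrite kle sk ak eqxx.
Qed.

End PreferringPlay.

End PreferringStrategy.

Theorem lemma1 (X : finType) (F : sae_family X) (st p : player) (a b : X) :
  a != b -> Lprec F a b ->
  (exists s : strategy X, winning_strategy F st p s) ->
  exists s : strategy X, winning_strategy F st p s /\ prefers st p s a b.
Proof.
move=> ab prec [s [Ls Ws]].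
have Fab : forall fi, fi \in F -> a \in fi.1 -> b \in fi.1.
  by move=> fi Ffi afi; case: (prec fi Ffi afi) => gj _ [bgj /subsetP gf _]; apply: gf.
exists (prefer_strategy st p a b s); split; last exact: prefers_prefer_strategy.
split=> [|play Cplay Cs]; first exact: legal_prefer_strategy.
have Cs' := (consistentP _ _ _ _ a).1 Cs.
case: (prefer_play_cases Cs' Cplay) => [Cs0 | [k [klt pk ak Cst]]].
  exact: Ws.
apply: (wins_map_tperm Fab _ klt pk ak); first by case/andP: Cplay.
by apply: Ws Cst; rewrite complete_play_map //; apply: perm_inj.
Qed.
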